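(* For each $x\in X$ we have $\deg(x)=\deg(T(x))$.
   Context: Paths and cycles: a graph is $G=(V,E)$ with $V$ finite and $E\subset V\times V$. A path is a finite sequence of vertices $(u_0,\dots,u_L)$ with $(u_j,u_{j+1})\in E$; its length is $|\cdot|=L$; a cycle is a path with $u_0=u_L$. For paths where one ends where the next starts, $+$ denotes concatenation and $a\,c$ means the cycle $c$ traversed $a$ times. Construction: $G_0=(V_0,E_0)$ with $V_0=\{v_{0,0}\}$, $E_0=\{e_{0,0}\}$, $e_{0,0}=(v_{0,0},v_{0,0})$. For $n\geq1$, $G_n=(V_n,E_n)$ consists of a vertex $v_{n,0}$, the loop $e_{n,0}=(v_{n,0},v_{n,0})$, and $n$ cycles $c_{n,1},\dots,c_{n,n}$, each starting and ending at $v_{n,0}$, whose vertices other than $v_{n,0}$ are pairwise distinct (within each cycle and across cycles); $V_n$ is the set of all these vertices and $E_n$ consists of $e_{n,0}$ and the edges of the cycles. The maps $\varphi_n\colon V_{n+1}\to V_n$ and the lengths of the cycles $c_{n+1,i}$ are defined together: $\varphi_n(v_{n+1,0})=v_{n,0}$, and for each $i$ a path $P_{n,i}$ in $G_n$ from $v_{n,0}$ to $v_{n,0}$ is given; $c_{n+1,i}$ has length $|P_{n,i}|$ and $\varphi_n$ maps its $j$-th vertex to the $j$-th vertex of $P_{n,i}$ (written $\varphi_n(c_{n+1,i})=P_{n,i}$). The paths are: $P_{0,1}=10\,e_{0,0}$; for $n\geq1$: $P_{n,i}=e_{n,0}+2c_{n,i}+2c_{n,i+1}+\dots+2c_{n,n}+e_{n,0}$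 for $2\leq i\leq n$; $P_{n,n+1}=(n+2)^2\big(\sum_{i=1}^n|c_{n,i}|\big)\,e_{n,0}$; and $P_{n,1}=(1\,e_{n,0}+2c_{n,1})+(2\,e_{n,0}+2c_{n,1})+\dots+(k_n\,e_{n,0}+2c_{n,1})+e_{n,0}+2c_{n,2}+\dots+2c_{n,n}+e_{n,0}$, where $k_n=2\big(1+\sum_{i=1}^n|c_{n,i}|\big)$. Let $X=\{x\in\prod_{n\geq0}V_n:\varphi_n(x_{n+1})=x_n\ \forall n\}$ with metric $d(x,y)=2^{-\min\{i:x_i\neq y_i\}}$ ($d(x,x)=0$); $X$ is a compact zero-dimensional metric space, and $T\colon X\to X$ defined by $T(x)=y$ iff $(x_n,y_n)\in E_n$ for all $n$ is a well-defined homeomorphism. Write $x_n$ for the $n$-th coordinate of $x$. Degree: for $v\in V_n$, $\deg(v)=+\infty$ if $v=v_{n,0}$ and $\deg(v)=i$ if $v$ is a vertex of $c_{n,i}$ different from $v_{n,0}$; for $x\in X$, $\deg(x)=\min_n\deg(x_n)$. *)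

From mathcomp Require Import all_boot.
From Stdlib Require Import ClassicalEpsilon.
Set Implicit Arguments. Unset Strict Implicit. Unset Printing Implicit Defensive.

(* Vertices of every G_n are encoded as pairs (i, j) : nat * nat.
   (0,0) is v_{n,0}; (i,j) with 1 <= i <= n and 1 <= j < |c_{n,i}| is the
   j-th vertex of the cycle c_{n,i} (the 0-th and last vertex being v_{n,0}). *)
Definition vtx := (nat * nat)%type.
Definition v0 : vtx := (0, 0).

(* A path is the sequence of its vertices (u_0, ..., u_L); its length is size - 1. *)
Definition plen (p : seq vtx) : nat := (size p).-1.

(* concatenation p + q (q starts where p ends) *)
Definition pcat (p q : seq vtx) : seq vtx := p ++ behead q.

(* a c : the cycle c traversed a times (0 times = the trivial path at its start) *)
Fixpoint prep (a : nat) (c : seq vtx) : seq vtx :=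
  match a with
  | 0 => [:: head v0 c]
  | a'.+1 => pcat c (prep a' c)
  end.

Definition eloop : seq vtx := [:: v0; v0].

Definition cycle_seq (i L : nat) : seq vtx :=
  v0 :: [seq (i, j) | j <- iota 1 L.-1] ++ [:: v0].

(* The paths P_{n,i} in G_n, given ls = [|c_{n,1}|; ...; |c_{n,n}|]. *)
Definition Pth (n : nat) (ls : seq nat) (i : nat) : seq vtx :=
  let cyc k := cycle_seq k (nth 0 ls k.-1) in
  let S := sumn ls in
  let twos k := foldr (fun m acc => pcat (prep 2 (cyc m)) acc) eloop
                      (iota k (n.+1 - k)) in
  let kn := 2 * (1 + S) in
  if n == 0 then prep 10 eloop
  else if i == 1 then
    pcat (foldr (fun a acc => pcat (pcat (prep a eloop) (prep 2 (cyc 1))) acc)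
                [:: v0] (iota 1 kn))
         (pcat eloop (twos 2))
  else if i == n.+1 then prep ((n + 2) ^ 2 * S) eloop
  else pcat eloop (twos i).

(* lens n = [|c_{n,1}|; ...; |c_{n,n}|], with |c_{n+1,i}| = |P_{n,i}| *)
Fixpoint lens (n : nat) : seq nat :=
  match n with
  | 0 => [::]
  | n'.+1 => [seq plen (Pth n' (lens n') i) | i <- iota 1 n'.+1]
  end.

Definition P (n i : nat) : seq vtx := Pth n (lens n) i.
Definition clen (n i : nat) : nat := nth 0 (lens n) i.-1.

Definition V (n : nat) : seq vtx :=
  v0 :: flatten [seq [seq (i, j) | j <- iota 1 (clen n i).-1] | i <- iota 1 n].

Definition E (n : nat) : seq (vtx * vtx) :=
  (v0, v0) :: flatten [seq zip (cycle_seq i (clen n i)) (behead (cycle_seq i (clen n i)))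
                      | i <- iota 1 n].

Definition edge (n : nat) (u v : vtx) : bool := (u, v) \in E n.

Definition phi (n : nat) (v : vtx) : vtx :=
  if v == v0 then v0 else nth v0 (P n v.1) v.2.

Definition inX (x : nat -> vtx) : Prop :=
  (forall n, x n \in V n) /\ (forall n, phi n (x n.+1) = x n).

(* degree of a vertex: None = +infinity *)
Definition degv (v : vtx) : option nat := if v == v0 then None else Some v.1.

Definition deg_is (x : nat -> vtx) (d : option nat) : Prop :=
  match d with
  | None => forall n, degv (x n) = None
  | Some k => (exists n, degv (x n) = Some k) /\
              (forall n m, degv (x n) = Some m -> k <= m)
  end.

Definition deg (x : nat -> vtx) : option nat :=
  epsilon (inhabits None) (deg_is x).

From mathcomp Require Import all_boot zify.
From Stdlib Require Import ClassicalEpsilon Classical.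

(* Every path P_{n,i} is either constant at v_{n,0}, or starts and ends with
   the loop e_{n,0}; moreover all its vertices lie on v_{n,0} or on cycles
   c_{n,j} with j >= i.  The second fact makes the degree of x_n
   non-increasing in n, so deg x = k means that x_n eventually stays on the
   cycles c_{n,k}.  The first fact says that phi_n sends the first and the
   last inner vertex of c_{n+1,i} to v_{n,0}: hence an edge
   of G_{n+1} entering or leaving a cycle maps to v_{n,0}.  So once x_n (or
   T(x)_n) is off v_{n,0}, the edge (x_{n+1}, T(x)_{n+1}) stays inside one
   cycle, and x and T(x) eventually lie on the same cycles. *)

Definition ends_at_v0 (s : seq vtx) := exists r, s = rcons r v0.
Definition ends_with_loop (s : seq vtx) := exists r, s = r ++ [:: v0; v0].
Definition starts_with_loop (s : seq vtx) := exists r, s = v0 :: v0 :: r.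

Lemma pcat_ends_at_v0 p q : ends_at_v0 p -> ends_at_v0 q -> ends_at_v0 (pcat p q).
Proof.
move=> ep [[|a r] ->]; first by rewrite /pcat cats0.
by exists (p ++ r); rewrite /pcat rcons_cat.
Qed.

Lemma pcat_ends_with_loop p q :
  ends_at_v0 p -> ends_with_loop q -> ends_with_loop (pcat p q).
Proof.
move=> [p' ->] [[|a r] ->]; first by exists p'; rewrite /pcat -cats1 -catA.
by exists (rcons p' v0 ++ r); rewrite /pcat catA.
Qed.

Lemma pcat_starts_with_loop p q : starts_with_loop p -> starts_with_loop (pcat p q).
Proof. by move=> [r ->]; exists (r ++ behead q). Qed.

Lemma prep_ends_at_v0 a c :
  head v0 c = v0 -> ends_at_v0 c -> ends_at_v0 (prep a c).
Proof.
move=> hc ec; elim: a => [|a IH] /=; first by rewrite hc; exists [::].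
exact: pcat_ends_at_v0.
Qed.

Lemma prep_cycle_ends_at_v0 a i L : ends_at_v0 (prep a (cycle_seq i L)).
Proof.
by apply: prep_ends_at_v0 => //; exists (v0 :: [seq (i, j) | j <- iota 1 L.-1]);
  rewrite /cycle_seq -cats1.
Qed.

Lemma prep_eloop_ends_at_v0 a : ends_at_v0 (prep a eloop).
Proof. by apply: prep_ends_at_v0 => //; exists [:: v0]. Qed.

Lemma foldr_pcat_ends_at_v0 (F : nat -> seq vtx) l b :
  (forall m, ends_at_v0 (F m)) -> ends_at_v0 b ->
  ends_at_v0 (foldr (fun m acc => pcat (F m) acc) b l).
Proof. by move=> eF eb; elim: l => //= m l; exact: pcat_ends_at_v0. Qed.

Lemma foldr_pcat_ends_with_loop (F : nat -> seq vtx) l b :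
  (forall m, ends_at_v0 (F m)) -> ends_with_loop b ->
  ends_with_loop (foldr (fun m acc => pcat (F m) acc) b l).
Proof. by move=> eF eb; elim: l => //= m l; exact: pcat_ends_with_loop. Qed.

Lemma all_pcat (a : pred vtx) p q : all a p -> all a q -> all a (pcat p q).
Proof.
move=> ap aq; rewrite /pcat all_cat ap /=.
by case: q aq => //= v q /andP[].
Qed.

Lemma all_prep (a : pred vtx) k c : a v0 -> all a c -> all a (prep k c).
Proof.
move=> a0 ac; elim: k => [|k IH] /=; last exact: all_pcat.
by case: c ac => [|v c] /=; [rewrite a0 | case/andP=> ->].
Qed.

Lemma all_foldr_pcat (a : pred vtx) (F : nat -> seq vtx) l b :
  {in l, forall m, all a (F m)} -> all a b ->
  all a (foldr (fun m acc => pcat (F m) acc) b l).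
Proof.
move=> aF ab; elim: l aF => //= m l IH aF.
apply: all_pcat; first by apply: aF; rewrite mem_head.
by apply: IH => m' lm'; apply: aF; rewrite inE lm' orbT.
Qed.

Lemma Pth_shape n ls i :
  all (pred1 v0) (Pth n ls i) \/
  starts_with_loop (Pth n ls i) /\ ends_with_loop (Pth n ls i).
Proof.
have twos_loop k : ends_with_loop (pcat eloop (foldr (fun m acc =>
    pcat (prep 2 (cycle_seq m (nth 0 ls m.-1))) acc) eloop (iota k (n.+1 - k)))).
  apply: pcat_ends_with_loop; first by exists [:: v0].
  apply: foldr_pcat_ends_with_loop; last by exists [::].
  by move=> m; exact: prep_cycle_ends_at_v0.
rewrite /Pth; case: eqP => _; first by left; exact: all_prep.
case: eqP => _.
  right; split.
    rewrite mulnDr muln1 [iota 1 _]/= /=.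
    by do 3 apply: pcat_starts_with_loop; exists [::].
  apply: pcat_ends_with_loop => //.
  apply: foldr_pcat_ends_at_v0; last by exists [::].
  by move=> m; apply: pcat_ends_at_v0;
    [exact: prep_eloop_ends_at_v0 | exact: prep_cycle_ends_at_v0].
case: eqP => _; first by left; exact: all_prep.
by right; split => //; apply: pcat_starts_with_loop; exists [::].
Qed.

Lemma Pth_nth1 n ls i : nth v0 (Pth n ls i) 1 = v0.
Proof.
case: (Pth_shape n ls i) => [all0 | [[r ->] _] //].
have [lt|ge] := ltnP 1 (size (Pth n ls i)); last by rewrite nth_default.
by move/allP/(_ _ (mem_nth v0 lt))/eqP: all0.
Qed.

Lemma Pth_nth_penult n ls i : nth v0 (Pth n ls i) (size (Pth n ls i)).-2 = v0.
Proof.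
case: (Pth_shape n ls i) => [all0 | [_ [r ->]]].
  have [lt|ge] := ltnP (size (Pth n ls i)).-2 (size (Pth n ls i)).
    by move/allP/(_ _ (mem_nth v0 lt))/eqP: all0.
  by rewrite nth_default.
by rewrite size_cat addn2 nth_cat ltnn subnn.
Qed.

Definition degv_ge (k : nat) (v : vtx) : bool := (v == v0) || (k <= v.1).

Lemma degv_ge_trans j k v : j <= k -> degv_ge k v -> degv_ge j v.
Proof. by rewrite /degv_ge => jk /orP[-> // | kv]; rewrite (leq_trans jk kv) orbT. Qed.

Lemma cycle_seq_degv_ge k i L : k <= i -> all (degv_ge k) (cycle_seq i L).
Proof.
move=> ki; rewrite /= all_cat /= andbT.
by apply/allP => v /mapP[j _ ->]; rewrite /degv_ge ki orbT.
Qed.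

Lemma Pth_degv_ge n ls i : all (degv_ge i) (Pth n ls i).
Proof.
have prep_cycle k m L : k <= m -> all (degv_ge k) (prep 2 (cycle_seq m L)).
  by move=> km; apply: all_prep => //; exact: cycle_seq_degv_ge.
have prep_loop k a : all (degv_ge k) (prep a eloop) by exact: all_prep.
have twos k : i <= k -> all (degv_ge i) (pcat eloop (foldr (fun m acc =>
    pcat (prep 2 (cycle_seq m (nth 0 ls m.-1))) acc) eloop (iota k (n.+1 - k)))).
  move=> ik; apply: all_pcat => //; apply: all_foldr_pcat => // m.
  by rewrite mem_iota => /andP[km _]; apply: prep_cycle; exact: leq_trans ik km.
rewrite /Pth; case: eqP => _; first exact: prep_loop.
case: eqP => [i1 | _]; last by case: eqP => _; [exact: prep_loop | exact: twos (leqnn i)].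
apply: all_pcat; last by apply: twos; rewrite i1.
apply: all_foldr_pcat => // m _.
by apply: all_pcat; [exact: prep_loop | apply: prep_cycle; rewrite i1].
Qed.

Lemma phi_degv_ge n k v : degv_ge k v -> degv_ge k (phi n v).
Proof.
rewrite /phi; case: eqP => // v_neq0 /orP[/eqP // | kv].
have [lt|ge] := ltnP v.2 (size (P n v.1)); last by rewrite nth_default.
apply: degv_ge_trans kv _.
by move/allP: (Pth_degv_ge n (lens n) v.1); apply; exact: mem_nth.
Qed.

Lemma inX_down (Q : pred vtx) x m n : (forall k v, Q v -> Q (phi k v)) ->
  inX x -> m <= n -> Q (x n) -> Q (x m).
Proof.
move=> Qphi [_ phix] /subnK <-; elim: (n - m) => // d IH Qx.
by apply: IH; rewrite -(phix (d + m)); exact: Qphi.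
Qed.

Lemma phi_v0 n : phi n v0 = v0.
Proof. by rewrite /phi eqxx. Qed.

Lemma inX_v0_down x m n : inX x -> m <= n -> x n = v0 -> x m = v0.
Proof.
move=> Xx mn /eqP xn; apply/eqP.
by apply: (inX_down (pred1 v0)) xn => // k v /eqP ->; rewrite phi_v0.
Qed.

Definition cycle_vertex (i L t : nat) : vtx := if 0 < t < L then (i, t) else v0.

Lemma nth_cycle_seq i L t : nth v0 (cycle_seq i L) t = cycle_vertex i L t.
Proof.
rewrite /cycle_seq /cycle_vertex; case: t => [|t] //=.
rewrite nth_cat size_map size_iota (_ : (t.+1 < L) = (t < L.-1)); last by case: L.
case: ifP => tL; first by rewrite (nth_map 0) ?size_iota // nth_iota // add1n.
by case: (t - L.-1) => [|[]].
Qed.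

Lemma cycle_vertex_neq0 i L t :
  cycle_vertex i L t != v0 -> [/\ 0 < t, t < L & cycle_vertex i L t = (i, t)].
Proof. by rewrite /cycle_vertex; case: ifP => [/andP[] | _ /eqP]. Qed.

Lemma cycle_vertex_eq0 i L t : cycle_vertex i L t = v0 -> (t == 0) || (L <= t).
Proof. by rewrite /cycle_vertex; case: ifP => [_ [_ ->] // | /negbT]; lia. Qed.

Lemma mem_zip_behead (s : seq vtx) u v : (u, v) \in zip s (behead s) ->
  exists t, u = nth v0 s t /\ v = nth v0 s t.+1.
Proof.
elim: s => [|a [|b s] IH] //=; rewrite inE => /orP[/eqP[-> ->] | uv].
  by exists 0.
by have [t [-> ->]] := IH uv; exists t.+1.
Qed.

Lemma edge_cases n u v : edge n u v ->
  u = v0 /\ v = v0 \/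
  exists i t, [/\ 0 < i <= n, u = cycle_vertex i (clen n i) t
                            & v = cycle_vertex i (clen n i) t.+1].
Proof.
rewrite /edge /E inE => /orP[/eqP[-> ->] | ]; first by left.
move/flatten_mapP => [i]; rewrite mem_iota => ilt /mem_zip_behead[t [-> ->]].
by right; exists i, t; rewrite !nth_cycle_seq; split => //; lia.
Qed.

Lemma clenS n i : 0 < i <= n.+1 -> clen n.+1 i = plen (P n i).
Proof.
move=> ilt; rewrite /clen (_ : lens n.+1 = [seq plen (P n j) | j <- iota 1 n.+1]) //.
rewrite (nth_map 0) ?size_iota; last by lia.
rewrite nth_iota; last by lia.
by rewrite add1n prednK //; case/andP: ilt.
Qed.

Lemma phi_cycle_vertex n i t : 0 < t -> phi n (i, t) = nth v0 (P n i) t.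
Proof. by rewrite /phi xpair_eqE /= => /gtn_eqF ->; rewrite andbF. Qed.

(* An edge of G_{n+1} entering or leaving a cycle goes through the second or
   the penultimate vertex of that cycle, both of which phi_n sends to v0. *)
Lemma edge_on_cycle n u v : edge n.+1 u v ->
  phi n u <> v0 \/ phi n v <> v0 -> [/\ u <> v0, v <> v0 & u.1 = v.1].
Proof.
case/edge_cases => [[-> ->] | [i [t [ilt -> ->]]]]; first by rewrite phi_v0; case.
set L := clen n.+1 i.
have [u0 | /cycle_vertex_neq0[t0 tL ->]] := eqVneq (cycle_vertex i L t) v0.
  have [v0' | /cycle_vertex_neq0[_ tSL ->]] := eqVneq (cycle_vertex i L t.+1) v0.
    by rewrite u0 v0' phi_v0; case.
  have t0 : t = 0 by move/cycle_vertex_eq0: u0; lia.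
  by rewrite u0 phi_v0 t0 phi_cycle_vertex // Pth_nth1; case.
have [v0' | /cycle_vertex_neq0[_ _ ->]] := eqVneq (cycle_vertex i L t.+1) v0; last first.
  by move=> _; split=> // -[]; lia.
have t_penult : t = (size (P n i)).-2.
  by move: tL; move/cycle_vertex_eq0: v0'; rewrite /L clenS // /plen; lia.
by rewrite v0' phi_v0 phi_cycle_vertex // t_penult Pth_nth_penult; case.
Qed.

Lemma deg_is_unique x d d' : deg_is x d -> deg_is x d' -> d = d'.
Proof.
case: d => [k|]; case: d' => [k'|] //=.
- move=> [[n xn] min] [[n' xn'] min'].
  by congr Some; apply/eqP; rewrite eqn_leq (min _ _ xn') (min' _ _ xn).
- by move=> [[n xn] _] none; rewrite none in xn.
- by move=> none [[n xn] _]; rewrite none in xn.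
Qed.

Lemma deg_is_exists x : exists d, deg_is x d.
Proof.
case: (classic (forall n, degv (x n) = None)) => [none | /not_all_ex_not[n]].
  by exists None.
case xn: (degv (x n)) => [m|] // _.
elim/ltn_ind: m n xn => m IH n xn.
have [[n' [m' [lt xn']]] | nosmaller] :=
  classic (exists n' m', m' < m /\ degv (x n') = Some m').
  exact: IH lt n' xn'.
exists (Some m); split; first by exists n.
move=> n' m' xn'; rewrite leqNgt; apply/negP => lt.
by apply: nosmaller; exists n', m'.
Qed.

Lemma deg_spec x : deg_is x (deg x).
Proof. exact: epsilon_spec (inhabits None) (deg_is x) (deg_is_exists x). Qed.

Lemma degv_SomeE v k : degv v = Some k <-> v <> v0 /\ v.1 = k.
Proof.
rewrite /degv; case: eqP => [-> | vv0]; first by split=> // -[].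
by split=> [[<-] | [_ <-]].
Qed.

Definition eventually_on_cycle (x : nat -> vtx) (k : nat) :=
  exists n0, forall n, n0 <= n -> x n <> v0 /\ (x n).1 = k.

Lemma deg_SomeE x k : inX x -> deg x = Some k <-> eventually_on_cycle x k.
Proof.
move=> Xx; have ge_down j m n : m <= n -> degv_ge j (x n) -> degv_ge j (x m).
  by move=> mn; apply: inX_down mn => // l; exact: phi_degv_ge.
split=> [dx | [n0 on0]].
  have [[n /degv_SomeE[xn xnk]] min] : deg_is x (Some k) by rewrite -dx; exact: deg_spec.
  exists n => m nm.
  have xm : x m <> v0 by move=> xm; apply: xn; exact: inX_v0_down Xx nm xm.
  have k_le : k <= (x m).1 by apply: (min m); apply/degv_SomeE.
  have : degv_ge (x m).1 (x n) by apply: ge_down nm _; rewrite /degv_ge leqnn orbT.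
  rewrite /degv_ge xnk; case: eqP => //= _ le_k.
  by split=> //; apply/eqP; rewrite eqn_leq le_k k_le.
apply: deg_is_unique (deg_spec x) _; split; first by exists n0; apply/degv_SomeE; apply: on0.
move=> n m /degv_SomeE[xn <-]; have [_ xNk] := on0 _ (leq_maxr n n0).
have : degv_ge k (x n) by apply: ge_down (leq_maxl n n0) _; rewrite /degv_ge xNk leqnn orbT.
by rewrite /degv_ge; case: eqP.
Qed.

Lemma eventually_on_cycle_edge x y k : inX x -> inX y ->
  (forall n, edge n (x n) (y n)) ->
  eventually_on_cycle x k <-> eventually_on_cycle y k.
Proof.
move=> [_ phix] [_ phiy] exy.
have on_cycle n : x n <> v0 \/ y n <> v0 ->
    [/\ x n.+1 <> v0, y n.+1 <> v0 & (x n.+1).1 = (y n.+1).1].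
  by rewrite -{1}(phix n) -(phiy n); exact: edge_on_cycle.
split=> -[n0 on0]; exists n0.+1 => -[// | n]; rewrite ltnS => n0n.
- have [_ yS <-] := on_cycle n (or_introl (proj1 (on0 n n0n))).
  by have [] := on0 n.+1 (leqW n0n).
- have [xS _ ->] := on_cycle n (or_intror (proj1 (on0 n n0n))).
  by have [] := on0 n.+1 (leqW n0n).
Qed.

Theorem lemma3p8 (x y : nat -> vtx) :
  inX x -> inX y -> (forall n, edge n (x n) (y n)) -> deg x = deg y.
Proof.
move=> Xx Xy exy.
have same_deg k : deg x = Some k <-> deg y = Some k.
  by rewrite (deg_SomeE x k Xx) (deg_SomeE y k Xy); exact: eventually_on_cycle_edge.
case dx: (deg x) => [k|]; first by symmetry; apply/same_deg.
by case dy: (deg y) => [l|] //; move/same_deg: dy; rewrite dx.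
Qed.
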